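(* Let $K\ge 1$, $c>0$, $P_{\max}>0$, and for $k,k'\in\{1,\dots,K\}$ let $a_{k,k'}\ge 0$, $d_k\ge 0$, $n_k>0$ with $a_{k,k}\ge d_k$, and $\gamma_k\ge 0$. Define on $[0,\infty)^K$ $$f_k(\mathbf{P})=\log_2\Big(\sum_{k'}a_{k,k'}P_{k'}+n_k\Big),\quad g_k(\mathbf{P})=\log_2\Big(\sum_{k'}a_{k,k'}P_{k'}-d_kP_k+n_k\Big),$$ and for a fixed $\mathbf P^{(n)}\in[0,\infty)^K$ the first-order Taylor expansions $$\hat f_k(\mathbf{P},\mathbf{P}^{(n)})=f_k(\mathbf{P}^{(n)})+\frac{\sum_{k'}a_{k,k'}(P_{k'}-P^{(n)}_{k'})}{\ln 2\,(\sum_{k'}a_{k,k'}P^{(n)}_{k'}+n_k)},$$ $$\hat g_k(\mathbf{P},\mathbf{P}^{(n)})=g_k(\mathbf{P}^{(n)})+\frac{\sum_{k'}a_{k,k'}(P_{k'}-P^{(n)}_{k'})-d_k(P_k-P^{(n)}_k)}{\ln 2\,(\sum_{k'}a_{k,k'}P^{(n)}_{k'}-d_kP^{(n)}_k+n_k)},$$ $\hat R_k(\mathbf P,\mathbf P^{(n)})=c(\hat f_k(\mathbf P,\mathbf P^{(n)})-g_k(\mathbf P))$, $\overline R_k(\mathbf P,\mathbf P^{(n)})=c(f_k(\mathbf P)-\hat g_k(\mathbf P,\mathbf P^{(n)}))$, and $P_{\mathrm N}(\mathbf P,x)=C_0+\sum_k\Delta_kP_k+\sum_k\beta_kx_k$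 with $C_0>0$, $\Delta_k\ge 1$, $\beta_k>0$. Consider the problem $$\mathcal P_l':\ \max_{\mathbf P}\ \frac{\sum_k\overline R_k(\mathbf P,\mathbf P^{(n)})}{P_{\mathrm N}(\mathbf P,(\hat R_k(\mathbf P,\mathbf P^{(n)}))_k)}\quad\text{s.t. } 0\le P_k\le P_{\max},\ \ \gamma_k\Big(\sum_{k'}a_{k,k'}P_{k'}+n_k\Big)-(1+\gamma_k)d_kP_k\le 0\ \ \forall k.$$ Then $\mathcal P_l'$ satisfies the standard concave-convex fractional programming (CCFP) formulation.
   Context: Model: uplink network with $K$ users, $P_k$ transmit power of user $k$; $c=\tau_uB/(\tau_u+\tau_p)$, $a_{k,k'}=\mathbb{E}\{|\mathrm{IS}_{k,k'}|^2\}$, $d_k=|\mathbb{E}\{\mathrm{DS}_k\}|^2$, $n_k$ effective noise power; $c(f_k-g_k)$ is the rate of user $k$; $P_{\mathrm N}$ is the total network power consumption, affine in the user rates with positive coefficients; the second constraint family is the QoS (minimum rate) constraint with $\gamma_k=2^{\tau_cR_{k,\min}/(\tau_uB)}-1$. A maximization problem $\max_{\mathbf P\in\mathcal X} A(\mathbf P)/B(\mathbf P)$ is a concave-convex fractional program (CCFP) if the numerator $A$ is concave, the denominator $B$ is convex and nonnegative (positive) on the feasible set, and the feasible set $\mathcal X$ is convex. *)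

From mathcomp Require Import all_boot all_order all_algebra.
From mathcomp Require Import all_classical all_reals all_analysis.
Set Implicit Arguments. Unset Strict Implicit. Unset Printing Implicit Defensive.
Import Order.TTheory GRing.Theory Num.Theory.
Local Open Scope ring_scope.

Section Defs.
Variable R : realType.
Variable K : nat.

Definition vec := 'I_K -> R.

Definition vcomb (t : R) (x y : vec) : vec := fun i => t * x i + (1 - t) * y i.

Definition convex_set (S : vec -> Prop) : Prop :=
  forall x y t, S x -> S y -> 0 <= t <= 1 -> S (vcomb t x y).

Definition concave_on (S : vec -> Prop) (F : vec -> R) : Prop :=
  forall x y t, S x -> S y -> 0 <= t <= 1 ->
    t * F x + (1 - t) * F y <= F (vcomb t x y).

Definition convex_on (S : vec -> Prop) (F : vec -> R) : Prop :=
  forall x y t, S x -> S y -> 0 <= t <= 1 ->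
    F (vcomb t x y) <= t * F x + (1 - t) * F y.

(* max_{P in S} A P / B P is a concave-convex fractional program *)
Definition CCFP (S : vec -> Prop) (A B : vec -> R) : Prop :=
  [/\ convex_set S, concave_on S A, convex_on S B & forall P, S P -> 0 < B P].

Definition log2 (x : R) : R := ln x / ln 2.

Variables (a : 'I_K -> 'I_K -> R) (d nn : 'I_K -> R).

Definition interf (k : 'I_K) (P : vec) : R := \sum_(k' < K) a k k' * P k'.

Definition f_ (k : 'I_K) (P : vec) : R := log2 (interf k P + nn k).
Definition g_ (k : 'I_K) (P : vec) : R := log2 (interf k P - d k * P k + nn k).

Definition fhat (k : 'I_K) (P Pn : vec) : R :=
  f_ k Pn + (\sum_(k' < K) a k k' * (P k' - Pn k')) /
            (ln 2 * (interf k Pn + nn k)).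

Definition ghat (k : 'I_K) (P Pn : vec) : R :=
  g_ k Pn + ((\sum_(k' < K) a k k' * (P k' - Pn k')) - d k * (P k - Pn k)) /
            (ln 2 * (interf k Pn - d k * Pn k + nn k)).

Definition Rhat (c : R) (k : 'I_K) (P Pn : vec) : R := c * (fhat k P Pn - g_ k P).
Definition Rbar (c : R) (k : 'I_K) (P Pn : vec) : R := c * (f_ k P - ghat k P Pn).

Definition PN (C0 : R) (Delta beta : 'I_K -> R) (P x : vec) : R :=
  C0 + \sum_(k < K) Delta k * P k + \sum_(k < K) beta k * x k.

Definition feasible (Pmax : R) (gamma : 'I_K -> R) (P : vec) : Prop :=
  forall k, [/\ 0 <= P k, P k <= Pmax &
     gamma k * (interf k P + nn k) - (1 + gamma k) * d k * P k <= 0].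
End Defs.

From Pilot Require Import Defs.
From mathcomp Require Import all_boot all_order all_algebra.
From mathcomp Require Import all_classical all_reals all_analysis.
From mathcomp Require Import ring lra.
Import Order.TTheory GRing.Theory Num.Theory.
Local Open Scope ring_scope.

(* The numerator sum_k c (f_k - ghat_k) is concave because f_k is log2 of a
   positive affine function and ghat_k is affine in P; symmetrically, c (fhat_k - g_k)
   is convex, so P_N, a positive combination of it plus an affine part, is convex.
   Since log2 lies below its tangents, fhat_k >= f_k >= g_k, hence P_N >= C0 > 0.
   The feasible set is a box intersected with half-spaces of affine constraints. *)

Section Log2.
Variable R : realType.

Lemma ln2_gt0 : 0 < ln (2 : R).
Proof. by apply: ln_gt0; lra. Qed.

Lemma ler_log2 (u v : R) : 0 < u -> 0 < v -> u <= v -> log2 u <= log2 v.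
Proof.
move=> u0 v0 uv; rewrite /log2 ler_pM2r ?invr_gt0 ?ln2_gt0 //.
by rewrite ler_ln ?posrE.
Qed.

Lemma log2_concave (t u v : R) : 0 <= t <= 1 -> 0 < u -> 0 < v ->
  t * log2 u + (1 - t) * log2 v <= log2 (t * u + (1 - t) * v).
Proof.
move=> /andP[t0 t1] u0 v0; rewrite /log2 !mulrA -mulrDl.
rewrite ler_pM2r ?invr_gt0 ?ln2_gt0 //.
exact: (@concave_ln R (Itv01 t0 t1) u v u0 v0).
Qed.

Lemma ln_le_tangent (u w : R) : 0 < u -> 0 < w -> ln u <= ln w + (u - w) / w.
Proof.
move=> u0 w0.
have uw_gt : -1 < u / w - 1 by have := divr_gt0 u0 w0; lra.
have := le_ln1Dx uw_gt.
rewrite addrC subrK ln_div ?posrE // mulrBl divff ?gt_eqF //.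
lra.
Qed.

Lemma log2_le_tangent (u w : R) : 0 < u -> 0 < w ->
  log2 u <= log2 w + (u - w) / (ln 2 * w).
Proof.
move=> u0 w0.
have -> : log2 w + (u - w) / (ln 2 * w) = (ln w + (u - w) / w) / ln 2.
  by rewrite /log2; field; rewrite !gt_eqF ?ln2_gt0.
by rewrite /log2 ler_pM2r ?invr_gt0 ?ln2_gt0 // ln_le_tangent.
Qed.

End Log2.

Section Convexity.
Variables (R : realType) (K : nat).
Implicit Types (S T : vec R K -> Prop) (F G h : vec R K -> R).

Definition affine F := forall x y t, F (vcomb t x y) = t * F x + (1 - t) * F y.

Definition orthant : vec R K -> Prop := fun x => forall i, 0 <= x i.

Lemma affine_linear (w : 'I_K -> R) : affine (fun x => \sum_i w i * x i).
Proof.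
move=> x y t; rewrite !mulr_sumr -big_split; apply: eq_bigr => i _.
by rewrite /vcomb /=; ring.
Qed.

Lemma affine_cst (c : R) : affine (fun=> c).
Proof. by move=> x y t; ring. Qed.

Lemma affine_convex_on S F : affine F -> convex_on S F.
Proof. by move=> hF x y t _ _ _; rewrite hF. Qed.

Lemma concave_on_sub S T F :
  (forall x, S x -> T x) -> concave_on T F -> concave_on S F.
Proof. by move=> ST hF x y t Sx Sy; apply: hF; apply: ST. Qed.

Lemma convex_on_sub S T F :
  (forall x, S x -> T x) -> convex_on T F -> convex_on S F.
Proof. by move=> ST hF x y t Sx Sy; apply: hF; apply: ST. Qed.

Lemma convex_onD S F G :
  convex_on S F -> convex_on S G -> convex_on S (fun x => F x + G x).
Proof.
move=> hF hG x y t Sx Sy ht.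
have := hF x y t Sx Sy ht; have := hG x y t Sx Sy ht; lra.
Qed.

Lemma concave_onB S F G :
  concave_on S F -> convex_on S G -> concave_on S (fun x => F x - G x).
Proof.
move=> hF hG x y t Sx Sy ht.
have := hF x y t Sx Sy ht; have := hG x y t Sx Sy ht; lra.
Qed.

Lemma convex_onB S F G :
  convex_on S F -> concave_on S G -> convex_on S (fun x => F x - G x).
Proof.
move=> hF hG x y t Sx Sy ht.
have := hF x y t Sx Sy ht; have := hG x y t Sx Sy ht; lra.
Qed.

Lemma concave_onZ S (c : R) F :
  0 <= c -> concave_on S F -> concave_on S (fun x => c * F x).
Proof.
move=> c0 hF x y t Sx Sy ht; rewrite mulrCA [(1 - t) * _]mulrCA -mulrDr.
exact: ler_wpM2l (hF x y t Sx Sy ht).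
Qed.

Lemma convex_onZ S (c : R) F :
  0 <= c -> convex_on S F -> convex_on S (fun x => c * F x).
Proof.
move=> c0 hF x y t Sx Sy ht; rewrite mulrCA [(1 - t) * _]mulrCA -mulrDr.
exact: ler_wpM2l (hF x y t Sx Sy ht).
Qed.

Lemma concave_on_sum (I : finType) S (F : I -> vec R K -> R) :
  (forall i, concave_on S (F i)) -> concave_on S (fun x => \sum_i F i x).
Proof.
move=> hF x y t Sx Sy ht; rewrite !mulr_sumr -big_split ler_sum // => i _.
exact: hF.
Qed.

Lemma convex_on_sum (I : finType) S (F : I -> vec R K -> R) :
  (forall i, convex_on S (F i)) -> convex_on S (fun x => \sum_i F i x).
Proof.
move=> hF x y t Sx Sy ht; rewrite !mulr_sumr -big_split ler_sum // => i _.
exact: hF.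
Qed.

Lemma concave_on_log2 S h :
  affine h -> (forall x, S x -> 0 < h x) -> concave_on S (fun x => log2 (h x)).
Proof.
move=> hh hpos x y t Sx Sy ht; rewrite hh.
by apply: log2_concave => //; apply: hpos.
Qed.

End Convexity.

Arguments affine {R K}.
Arguments orthant {R K}.

Section Model.
Variables (R : realType) (K : nat) (a : 'I_K -> 'I_K -> R) (d nn : 'I_K -> R).
Hypotheses (ha : forall k k', 0 <= a k k') (hd : forall k, 0 <= d k)
  (hn : forall k, 0 < nn k) (hakk : forall k, d k <= a k k).
Implicit Types (P Pn : vec R K) (k : 'I_K).

Lemma affine_interf k : affine (interf a k).
Proof. exact: affine_linear. Qed.

Lemma sum_interf_diff k P Pn :
  \sum_(k' < K) a k k' * (P k' - Pn k') = interf a k P - interf a k Pn.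
Proof. by rewrite /interf -sumrB; apply: eq_bigr => i _; rewrite mulrBr. Qed.

Lemma interf_ge_diag k P : orthant P -> a k k * P k <= interf a k P.
Proof.
move=> hP; rewrite /interf (bigD1 k) //= lerDl sumr_ge0 // => i _.
exact: mulr_ge0.
Qed.

Lemma signal_gt0 k P : orthant P -> 0 < interf a k P + nn k.
Proof.
move=> hP; have := interf_ge_diag k P hP.
have := mulr_ge0 (ha k k) (hP k); have := hn k; lra.
Qed.

Lemma interference_gt0 k P : orthant P -> 0 < interf a k P - d k * P k + nn k.
Proof.
move=> hP; have := interf_ge_diag k P hP.
have := ler_wpM2r (hP k) (hakk k); have := hn k; lra.
Qed.

Lemma f_concave k : concave_on orthant (f_ a nn k).
Proof.
apply: concave_on_log2 => [x y t|P]; last exact: signal_gt0.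
by rewrite affine_interf; ring.
Qed.

Lemma g_concave k : concave_on orthant (g_ a d nn k).
Proof.
apply: concave_on_log2 => [x y t|P]; last exact: interference_gt0.
by rewrite affine_interf /vcomb; ring.
Qed.

Lemma fhat_affine k Pn : affine (fun P => fhat a nn k P Pn).
Proof. by move=> x y t; rewrite /fhat !sum_interf_diff affine_interf; ring. Qed.

Lemma ghat_affine k Pn : affine (fun P => ghat a d nn k P Pn).
Proof.
by move=> x y t; rewrite /ghat !sum_interf_diff affine_interf /vcomb; ring.
Qed.

Lemma g_le_f k P : orthant P -> g_ a d nn k P <= f_ a nn k P.
Proof.
move=> hP; apply: ler_log2; [exact: interference_gt0 | exact: signal_gt0 |].
by have := mulr_ge0 (hd k) (hP k); lra.
Qed.

Lemma f_le_fhat k P Pn : orthant P -> orthant Pn -> f_ a nn k P <= fhat a nn k P Pn.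
Proof.
move=> hP hPn; rewrite /fhat sum_interf_diff.
have -> : interf a k P - interf a k Pn =
  (interf a k P + nn k) - (interf a k Pn + nn k) by ring.
by apply: log2_le_tangent; apply: signal_gt0.
Qed.

Lemma Rhat_ge0 (c : R) k P Pn :
  0 <= c -> orthant P -> orthant Pn -> 0 <= Rhat a d nn c k P Pn.
Proof.
move=> c0 hP hPn; rewrite /Rhat mulr_ge0 // subr_ge0.
exact: le_trans (g_le_f k P hP) (f_le_fhat k P Pn hP hPn).
Qed.

Lemma Rbar_concave (c : R) k Pn :
  0 <= c -> concave_on orthant (fun P => Rbar a d nn c k P Pn).
Proof.
move=> c0; apply: concave_onZ c0 _; apply: concave_onB (f_concave k) _.
exact/affine_convex_on/ghat_affine.
Qed.

Lemma Rhat_convex (c : R) k Pn :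
  0 <= c -> convex_on orthant (fun P => Rhat a d nn c k P Pn).
Proof.
move=> c0; apply: convex_onZ c0 _; apply: convex_onB (g_concave k).
exact/affine_convex_on/fhat_affine.
Qed.

Lemma feasible_orthant (Pmax : R) (gamma : 'I_K -> R) P :
  feasible a d nn Pmax gamma P -> orthant P.
Proof. by move=> hP k; have [] := hP k. Qed.

(* Qualified because the [convex_set] of mathcomp-analysis shadows it. *)
Lemma convex_feasible (Pmax : R) (gamma : 'I_K -> R) :
  Defs.convex_set (feasible a d nn Pmax gamma).
Proof.
move=> x y t hx hy /andP[t0 t1] k.
have [x0 x1 x2] := hx k; have [y0 y1 y2] := hy k.
rewrite /vcomb affine_interf; split; nra.
Qed.

Variables (c C0 : R) (Delta beta : 'I_K -> R) (Pn : vec R K).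
Hypotheses (hc : 0 <= c) (hbeta : forall k, 0 <= beta k).

Lemma PN_convex :
  convex_on orthant (fun P => PN C0 Delta beta P (fun k => Rhat a d nn c k P Pn)).
Proof.
apply: convex_onD; first apply: convex_onD.
- exact/affine_convex_on/affine_cst.
- exact/affine_convex_on/affine_linear.
apply: convex_on_sum => k; apply: convex_onZ (hbeta k) _.
exact: Rhat_convex.
Qed.

Lemma PN_ge_C0 P : (forall k, 0 <= Delta k) -> orthant P -> orthant Pn ->
  C0 <= PN C0 Delta beta P (fun k => Rhat a d nn c k P Pn).
Proof.
move=> hDelta hP hPn; rewrite /PN -addrA lerDl addr_ge0 //.
- by apply: sumr_ge0 => k _; apply: mulr_ge0.
- by apply: sumr_ge0 => k _; apply: mulr_ge0 => //; apply: Rhat_ge0.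
Qed.

End Model.

Theorem lemma5 (R : realType) (K : nat) (hK : (1 <= K)%N)
  (c Pmax C0 : R) (a : 'I_K -> 'I_K -> R) (d nn gamma Delta beta : 'I_K -> R)
  (Pn : 'I_K -> R)
  (hc : 0 < c) (hPmax : 0 < Pmax) (hC0 : 0 < C0)
  (ha : forall k k', 0 <= a k k') (hd : forall k, 0 <= d k)
  (hn : forall k, 0 < nn k) (hakk : forall k, d k <= a k k)
  (hgamma : forall k, 0 <= gamma k) (hDelta : forall k, 1 <= Delta k)
  (hbeta : forall k, 0 < beta k) (hPn : forall k, 0 <= Pn k) :
  CCFP (feasible a d nn Pmax gamma)
    (fun P => \sum_(k < K) Rbar a d nn c k P Pn)
    (fun P => PN C0 Delta beta P (fun k => Rhat a d nn c k P Pn)).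
Proof.
have Sorth := @feasible_orthant R K a d nn Pmax gamma.
have hc0 := ltW hc.
have hbeta0 k := ltW (hbeta k).
have hDelta0 k : 0 <= Delta k by apply: le_trans (hDelta k).
split.
- exact: convex_feasible.
- apply: concave_on_sub Sorth _; apply: concave_on_sum => k.
  by apply: Rbar_concave.
- by apply: convex_on_sub Sorth _; apply: PN_convex.
- move=> P /Sorth hP; apply: lt_le_trans hC0 _.
  by apply: PN_ge_C0.
Qed.
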